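(* Let $d\ge3$, $0<z<1$, $0<\alpha<1/2$, and for $\beta>0$ set $y=y(\beta)=-\log(z)/\beta$. Let $r_1,\dots,r_d$ be independent with distribution $\alpha\delta_{-1}+(1-2\alpha)\delta_0+\alpha\delta_1$, let $\rho_i(\sigma)=\frac{1+\sigma r_i}{2}$ for $\sigma=\pm1$, and \[X_1=\sum_{\tau\in\{\pm1\}}\prod_{h=1}^d\left(1-(1-e^{-\beta})\rho_h(\tau)\right),\qquad X_2=1-(1-e^{-\beta})\sum_{\tau\in\{\pm1\}}\rho_1(\tau)\rho_2(\tau).\] Then \[\lim_{\beta\to\infty}\frac{1}{\beta y}\left(\log\mathbb{E}[X_1^y]-\frac d2\log\mathbb{E}[X_2^y]\right)=F_d(\alpha,z),\] where $F_d(\alpha,z)=-\frac{\log(\zeta\mathcal{A}^d\xi)}{\log z}+\frac{d\log(1-2\alpha^2+2\alpha^2z)}{2\log z}$, $\mathcal{A}=(1-2\alpha)I+2\alpha\sqrt z\,\mathcal{M}$, $I$ is the $(d+1)\times(d+1)$ identity, $\zeta=(1,0,\dots,0)\in\mathbb{R}^{1\times(d+1)}$, $\xi=(1,z^{-1/2},z^{-1},\dots,z^{-d/2})^T$, and $\mathcal{M}$ is the $(d+1)\times(d+1)$ matrix indexed by $0,\dots,d$ with $\mathcal{M}_{0,1}=\mathcal{M}_{d,d-1}=1$, $\mathcal{M}_{i,i-1}=\mathcal{M}_{i,i+1}=1/2$ for $1\le i\le d-1$, and all other entries $0$.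
   Context: $\delta_x$ denotes the point mass at $x$. *)

From HB Require Import structures.
From mathcomp Require Import all_boot all_order all_algebra.
From mathcomp Require Import all_classical all_reals all_analysis.
Set Implicit Arguments. Unset Strict Implicit. Unset Printing Implicit Defensive.
Import Order.TTheory GRing.Theory Num.Theory.
Import numFieldNormedType.Exports.
Local Open Scope ring_scope.

Section Defs.
Variable R : realType.

Definition rval (k : 'I_3) : R := (val k)%:R - 1.

Definition rweight (alpha : R) (k : 'I_3) : R :=
  if val k == 1%N then 1 - 2 * alpha else alpha.

(* Expectation of f(r_1,...,r_d) for r_1,...,r_d independent with the
   above law: sum over the finite product space with product weights. *)
Definition expect (d : nat) (alpha : R) (f : ('I_d -> R) -> R) : R :=
  \sum_(r : {ffun 'I_d -> 'I_3})
     (\prod_(h < d) rweight alpha (r h)) * f (fun h => rval (r h)).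

Definition rho (ri sigma : R) : R := (1 + sigma * ri) / 2.

Definition X1 (d : nat) (beta : R) (r : 'I_d -> R) : R :=
  \sum_(tau <- [:: -1; 1])
     \prod_(h < d) (1 - (1 - expR (- beta)) * rho (r h) tau).

(* rho_1(tau) rho_2(tau): product over the first two coordinates h = 0,1 *)
Definition X2 (d : nat) (beta : R) (r : 'I_d -> R) : R :=
  1 - (1 - expR (- beta)) *
      \sum_(tau <- [:: -1; 1]) \prod_(h < d | (h < 2)%N) rho (r h) tau.

Definition Mmat (d : nat) : 'M[R]_(d.+1) :=
  \matrix_(i, j)
    if (val i == 0)%N then ((val j == 1)%N)%:R
    else if (val i == d) then ((val j == d.-1)%N)%:R
    else if (val j == (val i).+1) || ((val j).+1 == val i) then 1 / 2 else 0.

Definition Amat (d : nat) (alpha z : R) : 'M[R]_(d.+1) :=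
  (1 - 2 * alpha) *: 1%:M + (2 * alpha * Num.sqrt z) *: Mmat d.

Definition zeta (d : nat) : 'rV[R]_(d.+1) := \row_(j < d.+1) ((val j == 0)%N)%:R.

Definition xi (d : nat) (z : R) : 'cV[R]_(d.+1) :=
  \col_(k < d.+1) powR z (- ((val k)%:R / 2)).

Definition Fd (d : nat) (alpha z : R) : R :=
  - ln ((zeta d *m (Amat d alpha z ^+ d) *m xi d z) ord0 ord0) / ln z
  + d%:R * ln (1 - 2 * alpha ^+ 2 + 2 * alpha ^+ 2 * z) / (2 * ln z).

End Defs.
Arguments expect {R} d alpha f.

From HB Require Import structures.
From mathcomp Require Import all_boot all_order all_algebra.
From mathcomp Require Import all_classical all_reals all_analysis.
From mathcomp Require Import ring lra zify.
Import Order.TTheory GRing.Theory Num.Theory.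
Import numFieldNormedType.Exports.
Local Open Scope ring_scope.
Local Open Scope classical_set_scope.
Set Implicit Arguments. Unset Strict Implicit. Unset Printing Implicit Defensive.

(* Put w = e^-beta, so that w ^ y = z.  For r in {-1,0,1}^d with p coordinates
   equal to 1 and m equal to -1, X1 is w ^ min(p,m) up to a factor 2^(d+1) and
   X2 is w ^ [r_1 = r_2 <> 0] up to a factor 2.  Hence X1 ^ y -> z ^ min(p,m)
   and X2 ^ y -> z ^ [r_1 = r_2 <> 0], and the limits pass inside the
   expectations, which are finite sums; the second one is computed directly.
   For the first one, revealing the coordinates one at a time, |p - m| performs
   a walk on {0..d} reflected at 0: a coordinate 0 (probability 1 - 2 alpha)
   leaves it in place, a coordinate +-1 (probability alpha each) moves it by one
   and multiplies the weight sqrt z ^ (p + m) by sqrt z.  This is exactly the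
   action of A on the basis rows, so zeta A^d is the expectation of
   sqrt z ^ (p + m) e_|p-m|, and pairing with xi turns
   sqrt z ^ (p + m) z ^ (-|p - m|/2) into z ^ min(p,m). *)

Section ConsFun.
Variables (T : Type) (n : nat).

Definition consf (t : T) (f : 'I_n -> T) : 'I_n.+1 -> T :=
  fun i => if unlift ord0 i is Some j then f j else t.

Lemma consf0 t f : consf t f ord0 = t.
Proof. by rewrite /consf unlift_none. Qed.

Lemma consf_lift t f j : consf t f (lift ord0 j) = f j.
Proof. by rewrite /consf liftK. Qed.

End ConsFun.

Arguments consf {T n} t f _.

Lemma big_ffunS (T : finType) (V : nmodType) n (F : {ffun 'I_n.+1 -> T} -> V) :
  \sum_(g : {ffun 'I_n.+1 -> T}) F g =
  \sum_(f : {ffun 'I_n -> T}) \sum_(t : T) F (finfun (consf t f)).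
Proof.
rewrite pair_bigA /= (reindex (fun p : {ffun 'I_n -> T} * T => finfun (consf p.2 p.1))) //=.
exists (fun g : {ffun 'I_n.+1 -> T} => ([ffun j => g (lift ord0 j)], g ord0)).
  move=> [f t] _ /=; rewrite ffunE consf0; congr pair.
  by apply/ffunP => j; rewrite !ffunE consf_lift.
move=> g _; apply/ffunP => i; rewrite ffunE /consf.
by case: unliftP => [j|] ->; rewrite ?ffunE.
Qed.

Section Expectation.
Variables (R : realType) (alpha : R).

Lemma eq_expect n (f g : ('I_n -> R) -> R) : f =1 g ->
  expect n alpha f = expect n alpha g.
Proof. by move=> /funext ->. Qed.

Lemma sum_rweight : \sum_(k < 3) rweight alpha k = 1.
Proof. by rewrite !big_ord_recl big_ord0 /rweight /=; lra. Qed.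

Lemma expect_cst n (c : R) : expect n alpha (fun=> c) = c.
Proof.
rewrite /expect -big_distrl /=.
rewrite -(bigA_distr_bigA (fun (_ : 'I_n) k => rweight alpha k)) /=.
by rewrite big1 ?mul1r // => h _; apply: sum_rweight.
Qed.

Lemma sum_rweight_rval (g : R -> R) :
  \sum_(k < 3) rweight alpha k * g (rval R k) =
  alpha * g (-1) + (1 - 2 * alpha) * g 0 + alpha * g 1.
Proof.
rewrite !big_ord_recl big_ord0 /rweight /rval /= addr0 sub0r subrr.
by rewrite addrA /bump /= (_ : 2%:R - 1 = 1 :> R) //; lra.
Qed.

Lemma expectS n (f : ('I_n.+1 -> R) -> R) :
  expect n.+1 alpha f = expect n alpha (fun x =>
    alpha * f (consf (-1) x) + (1 - 2 * alpha) * f (consf 0 x) + alpha * f (consf 1 x)).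
Proof.
rewrite /expect big_ffunS; apply: eq_bigr => r _.
rewrite -(sum_rweight_rval (fun t => f (consf t (fun h => rval R (r h))))) mulr_sumr.
apply: eq_bigr => k _; rewrite big_ord_recl ffunE consf0 mulrCA -!mulrA.
congr (_ * (_ * _)).
  by apply: eq_bigr => h _; rewrite ffunE consf_lift.
congr f; apply: funext => i; rewrite ffunE /consf.
by case: unliftP.
Qed.

Lemma ler_expect n (f g : ('I_n -> R) -> R) : 0 <= alpha <= 2^-1 ->
  (forall x, f x <= g x) -> expect n alpha f <= expect n alpha g.
Proof.
move=> /andP[a0 a1] fg; apply: ler_sum => r _; apply: ler_wpM2l => //.
by apply: prodr_ge0 => h _; rewrite /rweight; case: ifP => _; lra.
Qed.

Definition trit_valued n (x : 'I_n -> R) := forall h, x h \in [:: -1; 0; 1].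

Lemma rval_trit (k : 'I_3) : rval R k \in [:: -1; 0; 1].
Proof.
rewrite !inE /rval; case: k => -[|[|[|k]]] //= _.
- by rewrite sub0r eqxx.
- by rewrite subrr eqxx orbT.
- by rewrite (_ : 2%:R - 1 = 1 :> R) ?eqxx ?orbT //; lra.
Qed.

Lemma cvg_expect (T : Type) (F : set_system T) {FF : Filter F} n
    (f : T -> ('I_n -> R) -> R) (l : ('I_n -> R) -> R) :
  (forall x, trit_valued x -> f t x @[t --> F] --> l x) ->
  expect n alpha (f t) @[t --> F] --> expect n alpha l.
Proof.
move=> fl; apply: cvg_big => [|r _]; first exact: add_continuous.
apply: cvgM; first exact: cvg_cst.
by apply: fl => h; apply: rval_trit.
Qed.

End Expectation.

Section Counting.
Variable R : realType.

Definition count_val n (x : 'I_n -> R) (s : R) : nat := \sum_(h < n) (x h == s).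

Lemma count_val_consf n t (x : 'I_n -> R) s :
  count_val (consf t x) s = ((t == s) + count_val x s)%N.
Proof. by rewrite /count_val big_ord_recl consf0; under eq_bigr do rewrite consf_lift. Qed.

Lemma count_valD_le n (x : 'I_n -> R) s s' : s != s' ->
  (count_val x s + count_val x s' <= n)%N.
Proof.
move=> ss'; rewrite /count_val -big_split /= -[n in (_ <= n)%N]card_ord -sum1_card.
apply: leq_sum => h _; case: eqP => [->|_]; last exact: leq_b1.
by case: (s =P s') ss'.
Qed.

Lemma trit_eqF : ((-1 == 0 :> R) = false) * ((-1 == 1 :> R) = false) *
  ((0 == -1 :> R) = false) * ((0 == 1 :> R) = false) *
  ((1 == -1 :> R) = false) * ((1 == 0 :> R) = false).
Proof. by do !split; apply/negbTE/eqP => h; lra. Qed.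

Lemma count_val_pm_le n (x : 'I_n -> R) : (count_val x 1 + count_val x (-1) <= n)%N.
Proof. by apply: count_valD_le; rewrite trit_eqF. Qed.

End Counting.

Lemma distn_neighbours (V : nmodType) (phi : nat -> V) (a b : nat) :
  phi `|a.+1 - b|%N + phi `|a - b.+1|%N = phi `|a - b|%N.+1 + phi `| `|a - b| - 1|%N.
Proof.
case: (ltngtP a b) => ab.
- rewrite addrC; congr (phi _ + phi _); lia.
- congr (phi _ + phi _); lia.
- by rewrite ab distnn distSn distnS.
Qed.

Lemma sqrt_powR_distn (R : realType) (z : R) (a b : nat) : 0 < z ->
  Num.sqrt z ^+ (a + b) * powR z (- ((`|a - b|%N)%:R / 2)) = z ^+ minn a b.
Proof.
move=> z0; wlog ab : a b / (a <= b)%N.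
  move=> H; case/orP: (leq_total a b) => [|ba]; first exact: H.
  by rewrite addnC distnC minnC; apply: H.
rewrite (minn_idPl ab) (distnEr ab) -{1}(subnKC ab) addnA addnn -mul2n.
rewrite exprD exprM sqr_sqrtr ?ltW // -mulrA -[RHS]mulr1; congr (_ * _).
rewrite -powR12_sqrt ?ltW // -powR_mulrn ?powR_ge0 // -powRrM [2^-1 * _]mulrC.
by rewrite powRN mulfV // gt_eqF ?powR_gt0.
Qed.

Section RandomWalk.
Variables (R : realType) (d : nat) (alpha z : R).
Local Notation A := (Amat d alpha z).
Local Notation erow j := ('e_(inord j) : 'rV[R]_d.+1).

Lemma eq_inordE (k : nat) (i : 'I_d.+1) : (k <= d)%N -> (i == inord k) = (val i == k).
Proof. by move=> kd; rewrite -(inj_eq val_inj) /= inordK. Qed.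

Lemma Mmat_row j : (j < d)%N ->
  erow j *m Mmat R d = 2^-1 *: (erow j.+1 + erow `|j - 1|%N).
Proof.
move=> jd; apply/rowP => i; rewrite -rowE !mxE /= (inordK (ltnW jd)) (ltn_eqF jd).
rewrite !eq_inordE //; last by lia.
case: j jd => [|j] jd /=; first by rewrite subnn; case: eqP => _ /=; lra.
rewrite subSS subn0 eqSS; case: eqP => [->|_] /=; last by case: eqP => _ /=; lra.
by rewrite (_ : (j.+2 == j) = false) /=; [lra | lia].
Qed.

Lemma Amat_col j (v : 'cV[R]_d.+1) : (j < d)%N ->
  (A *m v) (inord j) 0 = (1 - 2 * alpha) * v (inord j) 0 +
    alpha * Num.sqrt z * (v (inord j.+1) 0 + v (inord `|j - 1|%N) 0).
Proof.
move=> jd; transitivity ((erow j *m A *m v) 0 0).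
  by rewrite -mulmxA -rowE [RHS]mxE.
rewrite /Amat mulmxDr -!scalemxAr mulmx1 Mmat_row //.
by rewrite mulmxDl -!scalemxAl mulmxDl -!rowE !mxE; field.
Qed.

Lemma walk_expect n (v : 'cV[R]_d.+1) : (n <= d)%N ->
  (erow 0 *m A ^+ n *m v) 0 0 = expect n alpha (fun x =>
    Num.sqrt z ^+ (count_val x 1 + count_val x (-1)) *
    v (inord `|count_val x 1 - count_val x (-1)|%N) 0).
Proof.
elim: n v => [|n IH] v nd.
  rewrite expr0 mulmx1 -rowE mxE.
  under eq_expect do rewrite /count_val !big_ord0.
  by rewrite expect_cst mul1r.
rewrite exprSr -mulmxE mulmxA -mulmxA IH ?(ltnW nd) // expectS.
apply: eq_expect => x; rewrite !count_val_consf !trit_eqF !eqxx /= !add0n.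
rewrite Amat_col; last by have := count_val_pm_le x; lia.
set p := count_val x 1; set m := count_val x (-1).
rewrite -(distn_neighbours (fun k => v (inord k) 0)) /= addnS addSn !exprS; ring.
Qed.

Lemma zeta_Amat_xi : 0 < z ->
  (zeta R d *m A ^+ d *m xi d z) 0 0 =
  expect d alpha (fun x => z ^+ minn (count_val x 1) (count_val x (-1))).
Proof.
move=> z0; have -> : zeta R d = erow 0.
  by apply/rowP => i; rewrite !mxE eq_inordE.
rewrite walk_expect //; apply: eq_expect => x; rewrite mxE /= inordK ?sqrt_powR_distn //.
by have := count_val_pm_le x; lia.
Qed.

End RandomWalk.

Section FactorBounds.
Variable R : realType.

Lemma rho_factor_bounds (w t s : R) : 0 < w <= 1 ->
  t \in [:: -1; 0; 1] -> s \in [:: -1; 1] ->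
  w ^+ (t == s) / 2 <= 1 - (1 - w) * rho t s <= w ^+ (t == s).
Proof.
move=> /andP[w0 w1]; rewrite !inE => /or3P[] /eqP-> /orP[] /eqP->;
  case: eqP => h; rewrite /rho /= ?expr0 ?expr1; apply/andP; split; lra.
Qed.

Lemma prod_expr_bounds n (g : 'I_n -> R) (e : 'I_n -> nat) (w : R) : 0 < w ->
  (forall h, w ^+ e h / 2 <= g h <= w ^+ e h) ->
  w ^+ (\sum_(h < n) e h) / 2 ^+ n <= \prod_(h < n) g h <= w ^+ (\sum_(h < n) e h).
Proof.
move=> w0 gb; rewrite -prodrXr; apply/andP; split.
  have -> : (\prod_(h < n) w ^+ e h) / 2 ^+ n = \prod_(h < n) (w ^+ e h / 2).
    by rewrite big_split /= prodfV prodr_const card_ord.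
  apply: ler_prod => h _; have /andP[-> _] := gb h.
  by rewrite divr_ge0 ?exprn_ge0 ?ltW.
apply: ler_prod => h _; have /andP[lo ->] := gb h.
by rewrite (le_trans _ lo) // divr_ge0 ?exprn_ge0 ?ltW.
Qed.

Lemma X1_bounds n (x : 'I_n -> R) (b : R) : 0 < b -> trit_valued x ->
  expR (- b) ^+ minn (count_val x 1) (count_val x (-1)) / 2 ^+ n.+1 <= X1 b x <=
  2 ^+ n.+1 * expR (- b) ^+ minn (count_val x 1) (count_val x (-1)).
Proof.
move=> b0 xt; rewrite /X1 big_cons big_cons big_nil addr0.
have : 0 < expR (- b) <= 1 by rewrite expR_gt0 expR_le1 oppr_le0 ltW.
move: (expR (- b)) => w /andP[w0 w1].
have T s : s \in [:: -1; 1] -> w ^+ count_val x s / 2 ^+ n <=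
    \prod_(h < n) (1 - (1 - w) * rho (x h) s) <= w ^+ count_val x s.
  move=> s_pm; apply: prod_expr_bounds => // h.
  by apply: rho_factor_bounds; rewrite ?w0.
have /andP[lm um] := T _ (mem_head _ _).
have /andP[lp up] := T _ (mem_last (-1) [:: 1]).
set c := minn _ _; set q := 2 ^+ n : R in lm lp *.
have q1 : 1 <= q by rewrite exprn_ege1 // ler1n.
have wc0 : 0 <= w ^+ c by rewrite exprn_ge0 ?ltW.
have cm : w ^+ count_val x (-1) <= w ^+ c.
  by apply: ler_wiXn2l; [exact: ltW | | exact: geq_minr].
have cp : w ^+ count_val x 1 <= w ^+ c.
  by apply: ler_wiXn2l; [exact: ltW | | exact: geq_minl].
have ge0 s : 0 <= w ^+ count_val x s / q.
  by rewrite divr_ge0 ?exprn_ge0 ?ltW ?(le_trans ler01).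
rewrite exprS -/q.
have -> : w ^+ c / (2 * q) = w ^+ c / q / 2 by rewrite invfM; ring.
apply/andP; split; last by nra.
by have := ge0 1; have := ge0 (-1); rewrite /c; case: leqP => _; lra.
Qed.

Definition agree n (x : 'I_n.+2 -> R) : bool :=
  (x ord0 == x (lift ord0 ord0)) && (x ord0 != 0).

Lemma prod_first_two n (F : 'I_n.+2 -> R) :
  \prod_(h < n.+2 | (h < 2)%N) F h = F ord0 * F (lift ord0 ord0).
Proof. by rewrite big_mkcond !big_ord_recl /= big1 ?mulr1. Qed.

Lemma X2_bounds n (x : 'I_n.+2 -> R) (b : R) : 0 < b -> trit_valued x ->
  expR (- b) ^+ agree x / 2 <= X2 b x <= expR (- b) ^+ agree x.
Proof.
move=> b0 xt; rewrite /X2 /agree big_cons big_cons big_nil addr0 !prod_first_two.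
have : 0 < expR (- b) <= 1 by rewrite expR_gt0 expR_le1 oppr_le0 ltW.
move: (expR (- b)) (xt ord0) (xt (lift ord0 ord0)) => w.
move: (x ord0) (x (lift ord0 ord0)) => s t; rewrite !inE.
move=> /or3P[]/eqP-> /or3P[]/eqP-> /andP[w0 w1]; rewrite /rho;
  repeat case: eqP => ? /=; rewrite ?expr0 ?expr1; apply/andP; split; lra.
Qed.

End FactorBounds.

Section Limits.
Variable R : realType.

Lemma ln_expR_sandwich (C X u : R) m : 0 < C ->
  expR (- u) ^+ m / C <= X <= C * expR (- u) ^+ m ->
  0 < X /\ `|ln X + m%:R * u| <= ln C.
Proof.
move=> C0; rewrite -expRM_natl => /andP[lo up].
have e0 : 0 < expR (m%:R * - u) := expR_gt0 _.
have X0 : 0 < X by apply: lt_le_trans lo; rewrite divr_gt0.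
move: lo up; rewrite -ler_ln ?posrE ?divr_gt0 // -[X <= _]ler_ln ?posrE ?mulr_gt0 //.
rewrite lnM ?posrE ?invr_gt0 // lnV ?posrE // lnM ?posrE // expRK => lo up.
rewrite mulrN in lo up; move: (m%:R * u) (ln X) (ln C) lo up => a b c lo up.
by split => //; rewrite ler_norml; apply/andP; split; lra.
Qed.

Lemma invr_cvgy0 : b^-1 @[b --> +oo] --> (0 : R).
Proof.
by apply/gtr0_cvgV0; [apply: nbhs_pinfty_gt; rewrite num_real | exact: cvg_id].
Qed.

Lemma powR_cvg_expR_sandwich (z C : R) m (X : R -> R) : 0 < z -> 1 <= C ->
  (forall b, 0 < b -> expR (- b) ^+ m / C <= X b <= C * expR (- b) ^+ m) ->
  powR (X b) (- ln z / b) @[b --> +oo] --> z ^+ m.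
Proof.
move=> z0 C1 XC; have C0 : 0 < C by lra.
pose err b := - ln z / b * (ln (X b) + m%:R * b).
have err0 : err b @[b --> +oo] --> 0.
  pose K := `|ln z| * ln C.
  apply: (@squeeze_cvgr _ _ _ _ (fun b => - (K * b^-1)) (fun b => K * b^-1)).
  - near=> b; have b0 : 0 < b by near: b; apply: nbhs_pinfty_gt; rewrite num_real.
    have [_ lnX] := ln_expR_sandwich C0 (XC b b0).
    rewrite -ler_norml /err !normrM normrN normfV (gtr0_norm b0) mulrAC.
    apply: ler_wpM2r; first by rewrite invr_ge0 ltW.
    by apply: ler_wpM2l.
  - rewrite -oppr0 -(mulr0 K); apply: cvgN.
    by apply: cvgM; [exact: cvg_cst | exact: invr_cvgy0].
  - by rewrite -(mulr0 K); apply: cvgM; [exact: cvg_cst | exact: invr_cvgy0].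
have -> : z ^+ m = expR (m%:R * ln z + 0) by rewrite addr0 expRM_natl lnK.
have lim : expR (m%:R * ln z + err b) @[b --> +oo] --> expR (m%:R * ln z + 0).
  apply: continuous_cvg; first exact: continuous_expR.
  by apply: cvgD; [exact: cvg_cst | exact: err0].
apply: cvg_trans lim; apply: near_eq_cvg; near=> b.
have b0 : 0 < b by near: b; apply: nbhs_pinfty_gt; rewrite num_real.
have [X0 _] := ln_expR_sandwich C0 (XC b b0).
by rewrite /powR gt_eqF // /err /=; congr expR; field; rewrite gt_eqF.
Unshelve. all: by end_near.
Qed.

Lemma X1_powR_cvg n (x : 'I_n -> R) (z : R) : 0 < z -> trit_valued x ->
  powR (X1 b x) (- ln z / b) @[b --> +oo] -->
    z ^+ minn (count_val x 1) (count_val x (-1)).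
Proof.
move=> z0 xt; apply: (powR_cvg_expR_sandwich (C := 2 ^+ n.+1)) => // [|b b0].
  by rewrite exprn_ege1 // ler1n.
exact: X1_bounds.
Qed.

Lemma X2_powR_cvg n (x : 'I_n.+2 -> R) (z : R) : 0 < z -> trit_valued x ->
  powR (X2 b x) (- ln z / b) @[b --> +oo] --> z ^+ agree x.
Proof.
move=> z0 xt; apply: (powR_cvg_expR_sandwich (C := 2)) => // [|b b0]; first lra.
by have := X2_bounds b0 xt; case/andP => lo up; apply/andP; split; lra.
Qed.

End Limits.

Lemma expect_agree (R : realType) n (alpha z : R) :
  expect n.+2 alpha (fun x => z ^+ agree x) = 1 - 2 * alpha ^+ 2 + 2 * alpha ^+ 2 * z.
Proof.
rewrite !expectS -[RHS](expect_cst alpha n); apply: eq_expect => x.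
by rewrite /agree !consf0 !consf_lift !consf0 !trit_eqF !eqxx /= !expr0 !expr1; ring.
Qed.

Lemma expect_pow_min_gt0 (R : realType) n (alpha z : R) :
  0 < z <= 1 -> 0 <= alpha <= 2^-1 ->
  0 < expect n alpha (fun x => z ^+ minn (count_val x 1) (count_val x (-1))).
Proof.
move=> /andP[z0 z1] a01; apply: (lt_le_trans (exprn_gt0 n z0)).
rewrite -[X in X <= _](expect_cst alpha n); apply: ler_expect => // x.
apply: ler_wiXn2l; [exact: ltW | exact: z1 |].
by have := count_val_pm_le x; rewrite geq_min; lia.
Qed.

Theorem proposition2p10 (R : realType) (d : nat) (alpha z : R) :
  (3 <= d)%N -> 0 < z < 1 -> 0 < alpha < 1 / 2 ->
  (let y := - ln z / beta in
     (beta * y)^-1 *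
       (ln (expect d alpha (fun r => powR (X1 beta r) y))
        - d%:R / 2 * ln (expect d alpha (fun r => powR (X2 beta r) y))))
    @[beta --> +oo] --> Fd d alpha z.
Proof.
move=> d3 /andP[z0 z1] /andP[a0 a1].
case: d d3 => [|[|n]] // _.
set Q := expect n.+2 alpha (fun x => z ^+ minn (count_val x 1) (count_val x (-1))).
set P := 1 - 2 * alpha ^+ 2 + 2 * alpha ^+ 2 * z.
have lnz : ln z < 0 by rewrite ln_lt0 ?z0.
have Q0 : 0 < Q by apply: expect_pow_min_gt0; apply/andP; split; lra.
have P0 : 0 < P by rewrite /P expr2; nra.
have EX1 : expect n.+2 alpha (fun x => powR (X1 b x) (- ln z / b)) @[b --> +oo] --> Q.
  by apply: cvg_expect => x xt; apply: X1_powR_cvg.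
have EX2 : expect n.+2 alpha (fun x => powR (X2 b x) (- ln z / b)) @[b --> +oo] --> P.
  by rewrite /P -(expect_agree n alpha z); apply: cvg_expect => x xt; apply: X2_powR_cvg.
have -> : Fd n.+2 alpha z = (- ln z)^-1 * (ln Q - n.+2%:R / 2 * ln P).
  by rewrite /Fd zeta_Amat_xi //; field; rewrite lt_eqF.
have lim : (- ln z)^-1 *
    (ln (expect n.+2 alpha (fun x => powR (X1 b x) (- ln z / b))) -
     n.+2%:R / 2 * ln (expect n.+2 alpha (fun x => powR (X2 b x) (- ln z / b))))
    @[b --> +oo] --> (- ln z)^-1 * (ln Q - n.+2%:R / 2 * ln P).
  apply: cvgM; first exact: cvg_cst.
  apply: cvgB; first exact: continuous_cvg (continuous_ln Q0) EX1.
  by apply: cvgM; [exact: cvg_cst | exact: continuous_cvg (continuous_ln P0) EX2].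
apply: cvg_trans _ lim; apply: near_eq_cvg; near=> b.
have b0 : 0 < b by near: b; apply: nbhs_pinfty_gt; rewrite num_real.
by rewrite /= mulrCA divff ?gt_eqF // mulr1.
Unshelve. all: by end_near.
Qed.
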